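(* Let $\sigma$ be a 2-structure and $X\subsetneq V(\sigma)$ with $\sigma[X]$ prime; write $\overline{X}=V(\sigma)\setminus X$. Suppose Statement (S5) holds (there is no $Y\subseteq\overline{X}$ with $|Y|=5$ and $\sigma[X\cup Y]$ prime). Then for each connected component $C$ of the outside graph $\Gamma_{(\sigma,\overline{X})}$, $P_5\not\leq C$.
   Context: A 2-structure $\sigma$ consists of a vertex set $V(\sigma)$ and an equivalence relation $\equiv_\sigma$ on ordered pairs of distinct vertices; $\sigma[W]$ is the induced 2-structure on $W$. A module is a set $M$ such that for all $x,y\in M$ and $v\notin M$, $(x,v)\equiv_\sigma(y,v)$ and $(v,x)\equiv_\sigma(v,y)$; $\sigma$ is prime if $|V(\sigma)|\geq3$ and its only modules are $\emptyset$, $V(\sigma)$ and singletons. The outside graph $\Gamma_{(\sigma,\overline{X})}$ has vertex set $\overline{X}$ and edges the 2-element sets $Y\subseteq\overline{X}$ with $\sigma[X\cup Y]$ prime. $P_5$ is the path on 5 vertices; $G\leq H$ means $G$ is isomorphic to an induced subgraph of $H$. *)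

From Stdlib Require Import Relations Arith.

(* A 2-structure: vertex set and an equivalence relation on ordered pairs of
   distinct vertices; [eqv x y u v] means (x,y) ≡ (u,v). *)
Record two_structure := {
  vtx : Type;
  eqv : vtx -> vtx -> vtx -> vtx -> Prop;
  eqv_refl : forall x y, x <> y -> eqv x y x y;
  eqv_sym : forall x y u v, x <> y -> u <> v -> eqv x y u v -> eqv u v x y;
  eqv_trans : forall x y u v a b, x <> y -> u <> v -> a <> b ->
      eqv x y u v -> eqv u v a b -> eqv x y a b
}.

Section TwoStruct.
Variable s : two_structure.
Notation V := (vtx s).

Definition is_module_in (W M : V -> Prop) : Prop :=
  (forall x, M x -> W x) /\
  (forall x y v, M x -> M y -> W v -> ~ M v ->
     eqv s x v y v /\ eqv s v x v y).

Definition prime_in (W : V -> Prop) : Prop :=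
  (exists a b c, W a /\ W b /\ W c /\ a <> b /\ a <> c /\ b <> c) /\
  (forall M, is_module_in W M ->
     (forall x, ~ M x) \/ (forall x, W x -> M x) \/
     (exists a, forall x, M x <-> x = a)).

Definition setU (A B : V -> Prop) : V -> Prop := fun v => A v \/ B v.

Definition card5 (Y : V -> Prop) : Prop :=
  exists f : nat -> V,
    (forall i j, i < 5 -> j < 5 -> f i = f j -> i = j) /\
    (forall v, Y v <-> exists i, i < 5 /\ v = f i).

Definition S5 (X : V -> Prop) : Prop :=
  ~ exists Y : V -> Prop,
      (forall y, Y y -> ~ X y) /\ card5 Y /\ prime_in (setU X Y).

Definition outside_edge (X : V -> Prop) (x y : V) : Prop :=
  ~ X x /\ ~ X y /\ x <> y /\ prime_in (fun v => X v \/ v = x \/ v = y).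

Definition is_component (X : V -> Prop) (C : V -> Prop) : Prop :=
  exists x0, ~ X x0 /\
    forall v, C v <-> clos_refl_trans V (outside_edge X) x0 v.

End TwoStruct.

Definition induced_P5 {V : Type} (E : V -> V -> Prop) (C : V -> Prop) : Prop :=
  exists f : nat -> V,
    (forall i, i < 5 -> C (f i)) /\
    (forall i j, i < 5 -> j < 5 -> f i = f j -> i = j) /\
    (forall i j, i < 5 -> j < 5 -> (E (f i) (f j) <-> (i = S j \/ j = S i))).

(* Let Y be the vertex set of an induced P5 of the outside graph; we show that
   s[X ∪ Y] is prime, contradicting (S5).  A module M of s[X ∪ Y] traces a
   trivial module on X and on every s[X ∪ {y, y'}] with yy' an edge.  If M
   contains X it swallows every y through an edge at y, and if M meets X in
   one point it cannot contain any y.  If M misses X but contains two vertices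
   y, z of the path, some path vertex w is adjacent to y but not to z; then w is
   outside M, so y and z are twins over X ∪ {w}, and the edge wy becomes an
   edge wz. *)

From Stdlib Require Import Relations Arith Lia Classical ClassicalEpsilon.

Section Primality.

Variable s : two_structure.
Notation V := (vtx s).

Lemma prime_in_ext (W W' : V -> Prop) :
  (forall v, W v <-> W' v) -> prime_in s W -> prime_in s W'.
Proof.
  intros HW [[a [b [c [Ha [Hb [Hc [Hab [Hac Hbc]]]]]]]] Hm].
  split.
  - exists a, b, c. repeat split; try apply HW; auto.
  - intros M [HMW HM].
    destruct (Hm M) as [H|[H|H]].
    + split; [intros x Mx; apply HW; auto|].
      intros x y v Mx My Wv Nv. apply HM; auto. apply HW; auto.
    + left; auto.
    + right; left. intros x Wx. apply H, HW; auto.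
    + right; right; auto.
Qed.

Lemma prime_in_two_points (W : V -> Prop) :
  prime_in s W -> exists a b, W a /\ W b /\ a <> b.
Proof. intros [[a [b [_ [Ha [Hb [_ [Hab _]]]]]]] _]. exists a, b; auto. Qed.

Lemma module_in_restrict (W W' M : V -> Prop) :
  is_module_in s W M -> (forall x, W' x -> W x) ->
  is_module_in s W' (fun x => M x /\ W' x).
Proof.
  intros [_ HM] HW. split.
  - intros x [_ Hx]; auto.
  - intros x y v [Mx _] [My _] Wv Nv.
    apply HM; auto.
Qed.

Lemma prime_in_module_trace (W W' M : V -> Prop) :
  is_module_in s W M -> (forall x, W' x -> W x) -> prime_in s W' ->
  (forall x, W' x -> ~ M x) \/ (forall x, W' x -> M x) \/
  (exists a, W' a /\ M a /\ forall x, W' x -> M x -> x = a).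
Proof.
  intros HM HW [_ Hprime].
  destruct (Hprime _ (module_in_restrict W W' M HM HW)) as [H|[H|[a H]]].
  - left. intros x Wx Mx. apply (H x); auto.
  - right; left. intros x Wx. apply H; auto.
  - right; right. exists a.
    destruct (proj2 (H a) eq_refl) as [Ma Wa].
    repeat split; auto. intros x Wx Mx. apply H; auto.
Qed.

Lemma module_in_preimage (W W' N : V -> Prop) (phi : V -> V) :
  (forall z, W z -> W' (phi z)) ->
  (forall z w, W z -> W w -> phi z = phi w -> z = w) ->
  (forall z w, W z -> W w -> z <> w -> eqv s z w (phi z) (phi w)) ->
  is_module_in s W' N ->
  is_module_in s W (fun z => W z /\ N (phi z)).
Proof.
  intros Hmap Hinj Heqv [_ HN]. split; [intros x [Wx _]; exact Wx|].
  intros x y v [Wx Nx] [Wy Ny] Wv Nv.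
  assert (Nv' : ~ N (phi v)) by (intro; apply Nv; split; auto).
  assert (xv : x <> v) by (intro; subst; apply Nv; split; auto).
  assert (yv : y <> v) by (intro; subst; apply Nv; split; auto).
  assert (pxv : phi x <> phi v) by (intro E; apply Hinj in E; auto).
  assert (pyv : phi y <> phi v) by (intro E; apply Hinj in E; auto).
  destruct (HN _ _ _ Nx Ny (Hmap v Wv) Nv') as [Eout Ein].
  split.
  - apply eqv_trans with (phi x) (phi v); auto.
    apply eqv_trans with (phi y) (phi v); auto.
    apply eqv_sym; auto.
  - apply eqv_trans with (phi v) (phi x); auto.
    apply eqv_trans with (phi v) (phi y); auto.
    apply eqv_sym; auto.
Qed.

Lemma prime_in_transport (W W' : V -> Prop) (phi : V -> V) :
  (forall z, W z -> W' (phi z)) ->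
  (forall z w, W z -> W w -> phi z = phi w -> z = w) ->
  (forall w, W' w -> exists z, W z /\ phi z = w) ->
  (forall z w, W z -> W w -> z <> w -> eqv s z w (phi z) (phi w)) ->
  prime_in s W -> prime_in s W'.
Proof.
  intros Hmap Hinj Hsurj Heqv [[a [b [c [Ha [Hb [Hc [Hab [Hac Hbc]]]]]]]] Hprime].
  split.
  - exists (phi a), (phi b), (phi c).
    repeat split; auto; intro E; apply Hinj in E; auto.
  - intros N HN.
    destruct (Hprime _ (module_in_preimage W W' N phi Hmap Hinj Heqv HN))
      as [H|[H|[d H]]].
    + left. intros w Nw.
      destruct (Hsurj w (proj1 HN w Nw)) as [z [Wz <-]].
      apply (H z); auto.
    + right; left. intros w Ww.
      destruct (Hsurj w Ww) as [z [Wz <-]]. apply H; auto.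
    + right; right. exists (phi d). intro w. split.
      * intro Nw. destruct (Hsurj w (proj1 HN w Nw)) as [z [Wz <-]].
        f_equal. apply H; auto.
      * intros ->. apply H; auto.
Qed.

Lemma prime_in_twin (U : V -> Prop) (a b : V) :
  a <> b -> ~ U a -> ~ U b ->
  (forall v, U v -> eqv s a v b v /\ eqv s v a v b) ->
  prime_in s (fun v => U v \/ v = a) -> prime_in s (fun v => U v \/ v = b).
Proof.
  intros Hab Ua Ub Htwin.
  set (phi := fun z => if excluded_middle_informative (z = a) then b else z).
  assert (phi_a : phi a = b).
  { unfold phi; destruct (excluded_middle_informative (a = a)); congruence. }
  assert (phi_other : forall z, z <> a -> phi z = z).
  { intros z Hz; unfold phi; destruct (excluded_middle_informative (z = a)); congruence. }
  clearbody phi.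
  apply prime_in_transport with phi.
  - intros z [Uz| ->]; [left; rewrite phi_other; congruence | right; auto].
  - intros z w Hz Hw E.
    destruct (classic (z = a)) as [-> | Hza], (classic (w = a)) as [-> | Hwa];
      rewrite ?phi_a, ?phi_other in E by assumption; subst; intuition congruence.
  - intros w [Uw| ->]; [exists w | exists a]; split; auto.
    apply phi_other; congruence.
  - intros z w Hz Hw Hzw.
    destruct (classic (z = a)) as [-> | Hza], (classic (w = a)) as [-> | Hwa];
      try congruence; rewrite ?phi_a, ?phi_other by assumption.
    + destruct Hw; [apply Htwin|]; congruence.
    + destruct Hz; [apply Htwin|]; congruence.
    + apply eqv_refl; auto.
Qed.

Section OutsideExtension.

Variables X Y : V -> Prop.
Notation edge := (outside_edge s X).

Hypothesis X_prime : prime_in s X.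
Hypothesis Y_outside : forall y, Y y -> ~ X y.
Hypothesis Y_no_isolated : forall y, Y y -> exists y', Y y' /\ edge y y'.
Hypothesis Y_separated : forall y z, Y y -> Y z -> y <> z ->
  exists w, Y w /\ ((edge w y /\ ~ edge w z) \/ (edge w z /\ ~ edge w y)).

Section ModuleTrace.

Variable M : V -> Prop.
Hypothesis M_module : is_module_in s (setU s X Y) M.

Lemma module_edge_trace (y y' : V) : Y y -> Y y' -> edge y y' ->
  let W := fun v => X v \/ v = y \/ v = y' in
  (forall x, W x -> ~ M x) \/ (forall x, W x -> M x) \/
  (exists a, W a /\ M a /\ forall x, W x -> M x -> x = a).
Proof.
  intros Yy Yy' [_ [_ [_ Hprime]]] W.
  apply prime_in_module_trace with (setU s X Y); auto.
  intros x [Xx|[-> | ->]]; [left | right | right]; auto.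
Qed.

Lemma module_containing_X_full :
  (forall x, X x -> M x) -> forall v, setU s X Y v -> M v.
Proof.
  intros HXM v [Xv|Yv]; auto.
  destruct (prime_in_two_points X X_prime) as [a [b [Xa [Xb Hab]]]].
  destruct (Y_no_isolated v Yv) as [v' [Yv' Hvv']].
  destruct (module_edge_trace v v' Yv Yv' Hvv') as [H|[H|[c [_ [_ H]]]]].
  - exfalso. apply (H a); auto.
  - apply H; auto.
  - exfalso. apply Hab. transitivity c; [|symmetry]; apply H; auto.
Qed.

Lemma module_meeting_X_once (u : V) :
  X u -> M u -> (forall x, X x -> M x -> x = u) -> forall v, M v -> v = u.
Proof.
  intros Xu Mu HXM v Mv.
  destruct (proj1 M_module v Mv) as [Xv|Yv]; auto.
  destruct (prime_in_two_points X X_prime) as [a [b [Xa [Xb Hab]]]].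
  destruct (Y_no_isolated v Yv) as [v' [Yv' Hvv']].
  destruct (module_edge_trace v v' Yv Yv' Hvv') as [H|[H|[c [_ [_ H]]]]].
  - exfalso. apply (H u); auto.
  - exfalso. apply Hab. rewrite (HXM a), (HXM b); auto.
  - exfalso. apply (Y_outside v Yv).
    rewrite (H v), <- (H u); auto.
Qed.

Lemma module_missing_X_edge_transfer (y z w : V) :
  (forall x, X x -> ~ M x) -> Y y -> Y z -> Y w -> M y -> M z ->
  edge w y -> edge w z.
Proof.
  intros HXM Yy Yz Yw My Mz Hwy.
  destruct (classic (y = z)) as [<-|Hyz]; [exact Hwy|].
  destruct (prime_in_two_points X X_prime) as [a [_ [Xa _]]].
  pose proof Hwy as [Xw [Xy [Hwy' Hprime]]].
  assert (Mw : ~ M w).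
  { intro Mw.
    destruct (module_edge_trace w y Yw Yy Hwy) as [H|[H|[c [_ [_ H]]]]].
    - apply (H w); auto.
    - apply (HXM a), H; auto.
    - apply Hwy'. rewrite (H w), (H y); auto. }
  assert (Hwz : w <> z) by congruence.
  assert (Xz : ~ X z) by auto.
  refine (conj Xw (conj Xz (conj Hwz _))).
  apply prime_in_ext with (fun v => (X v \/ v = w) \/ v = z); [intro v; tauto|].
  apply prime_in_twin with y; auto.
  - intros [Xy'|Eyw]; auto.
  - intros [Xz'|Ezw]; auto.
  - intros v Hv. apply (proj2 M_module); auto.
    + destruct Hv as [Xv| ->]; [left|right]; auto.
    + destruct Hv as [Xv| ->]; auto.
  - apply prime_in_ext with (2 := Hprime). intro v; tauto.
Qed.

Lemma module_missing_X_at_most_one (y z : V) :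
  (forall x, X x -> ~ M x) -> M y -> M z -> y = z.
Proof.
  intros HXM My Mz.
  assert (HY : forall v, M v -> Y v).
  { intros v Mv. destruct (proj1 M_module v Mv) as [Xv|Yv]; auto.
    exfalso; apply (HXM v); auto. }
  apply NNPP; intro Hyz.
  destruct (Y_separated y z (HY y My) (HY z Mz) Hyz)
    as [w [Yw [[Hwy Hwz]|[Hwz Hwy]]]]; [apply Hwz | apply Hwy].
  - apply module_missing_X_edge_transfer with y; auto.
  - apply module_missing_X_edge_transfer with z; auto.
Qed.

End ModuleTrace.

Lemma prime_in_union_outside : prime_in s (setU s X Y).
Proof.
  pose proof X_prime as [[a [b [c [Xa [Xb [Xc Hdistinct]]]]]] _].
  split; [exists a, b, c; unfold setU; tauto|].
  intros M HM.
  assert (X_sub : forall x, X x -> setU s X Y x) by (intros x Xx; left; exact Xx).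
  destruct (prime_in_module_trace _ _ M HM X_sub X_prime) as [H|[H|[u [Xu [Mu H]]]]].
  - destruct (classic (exists p, M p)) as [[p Mp]|Hempty].
    + right; right. exists p. intro x. split; [|intros ->; auto].
      intro Mx. apply (module_missing_X_at_most_one M); auto.
    + left. intros x Mx. apply Hempty; eauto.
  - right; left. apply module_containing_X_full; auto.
  - right; right. exists u. intro x. split; [|intros ->; auto].
    apply (module_meeting_X_once M); auto.
Qed.

End OutsideExtension.

End Primality.

Definition path_adj (i j : nat) : Prop := i = S j \/ j = S i.

Lemma path_adj_neighbour (n i : nat) : 2 <= n -> i < n ->
  exists j, j < n /\ path_adj i j.
Proof.
  unfold path_adj; intros Hn Hi.
  destruct i as [|i]; [exists 1 | exists i]; lia.
Qed.

(* The bound excludes P3, whose two ends have the same neighbourhood. *)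
Lemma path_adj_separating (n i k : nat) : 4 <= n -> i < n -> k < n -> i <> k ->
  exists j, j < n /\
    ((path_adj j i /\ ~ path_adj j k) \/ (path_adj j k /\ ~ path_adj j i)).
Proof.
  intros Hn.
  assert (Hlt : forall i k, i < k < n -> exists j, j < n /\
    ((path_adj j i /\ ~ path_adj j k) \/ (path_adj j k /\ ~ path_adj j i))).
  { unfold path_adj; intros i' k' H.
    destruct (Nat.eq_dec k' (S i')); [exists k'; lia|].
    destruct i' as [|i']; [|exists i'; lia].
    destruct (Nat.lt_ge_cases (S k') n); [exists (S k') | exists (pred k')]; lia. }
  intros Hi Hk Hik.
  destruct (Nat.lt_total i k) as [Hik'|[Heq|Hki]]; [| contradiction |].
  - apply Hlt; lia.
  - destruct (Hlt k i) as [j [Hj H]]; [lia|]. exists j; tauto.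
Qed.

Theorem lemma4p4 (s : two_structure) (X : vtx s -> Prop) :
  (exists v, ~ X v) ->
  prime_in s X ->
  S5 s X ->
  forall C : vtx s -> Prop, is_component s X C ->
    ~ induced_P5 (outside_edge s X) C.
Proof.
  (* The component is irrelevant: no induced P5 exists anywhere in the outside graph. *)
  intros _ X_prime HS5 C _ [f [_ [f_inj f_adj]]].
  set (Y := fun v => exists i, i < 5 /\ v = f i).
  assert (Y_no_isolated : forall y, Y y -> exists y', Y y' /\ outside_edge s X y y').
  { intros y [i [Hi ->]].
    destruct (path_adj_neighbour 5 i) as [j [Hj Hij]]; auto.
    exists (f j). split; [exists j; auto | apply f_adj; auto]. }
  assert (Y_outside : forall y, Y y -> ~ X y).
  { intros y Yy. destruct (Y_no_isolated y Yy) as [y' [_ [Xy _]]]. exact Xy. }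
  apply HS5. exists Y. split; [exact Y_outside | split].
  - exists f. split; [exact f_inj | intro v; reflexivity].
  - apply prime_in_union_outside; auto.
    intros y z [i [Hi ->]] [k [Hk ->]] Hyz.
    assert (Hik : i <> k) by congruence.
    destruct (path_adj_separating 5 i k) as [j [Hj Hsep]]; auto.
    exists (f j). split; [exists j; auto|].
    rewrite !f_adj by assumption. exact Hsep.
Qed.
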